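(* Assume $\bm\lambda\neq0$ and $\bm\mu\neq 0$. (1) For every $k\ge1$, the vector $I^k w$ satisfies $E_{-i,j}\,I^kw=\lambda_i\mu_j\,I^kw$ for all $i\ge0$, $j\ge1$, and $I^kw\notin\mathbb C w$. (2) For every $d\in\mathbb C$, the $\widehat{\mathfrak{gl}}$-submodule $N_d$ of $M_1(\bm\lambda,\bm\mu)$ generated by the vectors $(I-d)I^kw$, $k\ge 0$, is a proper subspace of $M_1(\bm\lambda,\bm\mu)$.
   Context: Let $\widehat{\mathcal A}$ be the Weyl algebra: the unital associative complex algebra generated by $a(r),a^*(r)$ ($r\in\mathbb Z$) with relations $[a(r),a(s)]=[a^*(r),a^*(s)]=0$ and $[a(r),a^*(s)]=\delta_{r+s,0}$. Fix integers $n\ge 0$, $m\ge 1$, $\bm\lambda=(\lambda_0,\dots,\lambda_n)\in\mathbb C^{n+1}$, $\bm\mu=(\mu_1,\dots,\mu_m)\in\mathbb C^m$, and set $\lambda_i=0$ for $i>n$, $\mu_j=0$ for $j>m$. The Whittaker module $M_1(\bm\lambda,\bm\mu)=\widehat{\mathcal A}/\mathcal I$, where $\mathcal I$ is the left ideal generated by $a(i)-\lambda_i$ ($i\ge 0$) and $a^*(j)-\mu_j$ ($j\ge 1$); $w=w_{\bm\lambda,\bm\mu}$ denotes the image of $1$. Normal ordering: $:a(i)a^*(j):$ equals $a^*(j)a(i)$ if $i\ge 0$ and $j\le 0$, and equals $a(i)a^*(j)$ otherwise. For $i,j\in\mathbb Z$, $E_{i,j}:=\,:a(-i)a^*(j):$,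 an operator on $M_1(\bm\lambda,\bm\mu)$ (these give a $\widehat{\mathfrak{gl}}$-module structure of central charge $-1$); $\widehat{\mathfrak{gl}}$-submodules and generation refer to invariance under all $E_{i,j}$. $I:=\sum_{j\in\mathbb Z}E_{j,j}$, a well-defined operator on $M_1(\bm\lambda,\bm\mu)$ commuting with all $E_{i,j}$. *)

(* Concrete (PBW / polynomial) model of the Whittaker module
   M_1(lambda, mu) of the Weyl algebra. *)
From HB Require Import structures.
From mathcomp Require Import all_boot all_algebra finmap.
From mathcomp Require Import complex Rstruct.
From Stdlib Require Import ClassicalEpsilon.

Set Implicit Arguments.
Unset Strict Implicit.
Unset Printing Implicit Defensive.
Import GRing.Theory Num.Theory.
Local Open Scope ring_scope.

Definition C : numClosedFieldType := (Rdefinitions.R)[i].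

Definition expo := {fsfun int -> nat with 0%N}.

(* A monomial  prod_{r<0} a(r)^{m.1 r} * prod_{s<=0} a*(s)^{m.2 s}.
   (Exponents at r >= 0 in m.1, resp. s >= 1 in m.2, are not used by
   elements of M_1.) *)
Definition mono := (expo * expo)%type.

Definition V := mono -> C.

Definition zero_mono : mono := ([fsfun], [fsfun]).

(* Elements of M_1(lambda,mu) = C[a(r) (r<0), a*(s) (s<=0)] . w :
   finitely supported coefficient functions supported on admissible monomials. *)
Definition admissible (m : mono) : Prop :=
  (forall r : int, 0 <= r -> m.1 r = 0%N) /\ (forall s : int, 1 <= s -> m.2 s = 0%N).

Definition inM1 (p : V) : Prop :=
  (exists s : seq mono, forall x, p x != 0 -> x \in s) /\
  (forall x, p x != 0 -> admissible x).

Definition mulA (r : int) (p : V) : V := fun x =>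
  if (0 < x.1 r)%N then p ([fsfun x.1 with r |-> (x.1 r).-1], x.2) else 0.
Definition mulS (s : int) (p : V) : V := fun x =>
  if (0 < x.2 s)%N then p (x.1, [fsfun x.2 with s |-> (x.2 s).-1]) else 0.
Definition derA (r : int) (p : V) : V := fun x =>
  (x.1 r).+1%:R * p ([fsfun x.1 with r |-> (x.1 r).+1], x.2).
Definition derS (s : int) (p : V) : V := fun x =>
  (x.2 s).+1%:R * p (x.1, [fsfun x.2 with s |-> (x.2 s).+1]).

Definition wvec : V := fun x => if x == zero_mono then 1 else 0.

Section Whittaker.
Variables (n m : nat) (lam : 'I_n.+1 -> C) (mu : 'I_m -> C).

(* lambda_i for i >= 0 (0 for i > n, and for i < 0 unused) *)
Definition lamx (i : int) : C :=
  match i with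
  | Posz k => match (insub k : option 'I_n.+1) with Some o => lam o | None => 0 end
  | Negz _ => 0
  end.
(* mu_j for j >= 1, with mu_j = mu (j-1) for 1 <= j <= m, 0 for j > m *)
Definition mux (j : int) : C :=
  match j with
  | Posz k.+1 => match (insub k : option 'I_m) with Some o => mu o | None => 0 end
  | _ => 0
  end.

Definition aop (r : int) (p : V) : V :=
  if 0 <= r then (fun x => lamx r * p x + derS (- r) p x) else mulA r p.
Definition asop (s : int) (p : V) : V :=
  if 1 <= s then (fun x => mux s * p x - derA (- s) p x) else mulS s p.

(* E_{i,j} = :a(-i) a*(j): *)
Definition Eop (i j : int) (p : V) : V :=
  if (0 <= - i) && (j <= 0) then asop j (aop (- i) p) else aop (- i) (asop j p).

Definition Ipart (N : nat) (p : V) : V := fun x =>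
  \sum_(k < (N + N).+1) Eop (k%:Z - N%:Z) (k%:Z - N%:Z) p x.

(* I = sum_{j in Z} E_{j,j}: the eventual value of the partial sums
   (which stabilize on M_1). *)
Definition Iop (p : V) : V :=
  epsilon (inhabits (fun _ => 0 : C))
    (fun u => exists N0 : nat, forall N : nat, (N0 <= N)%N -> Ipart N p = u).

Definition gen_submodule (G : V -> Prop) (v : V) : Prop :=
  forall S : V -> Prop,
    S (fun _ => 0) ->
    (forall x y, S x -> S y -> S (fun t => x t + y t)) ->
    (forall (c : C) x, S x -> S (fun t => c * x t)) ->
    (forall (i j : int) x, S x -> S (Eop i j x)) ->
    (forall g, G g -> S g) ->
    S v.

Definition Nd_gens (d : C) (g : V) : Prop :=
  exists k : nat, g = (fun t => Iop (iter k Iop wvec) t - d * iter k Iop wvec t).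

End Whittaker.

(* In the polynomial model, I commutes with every E_{i,j}: the commutator of E_{i,j} with
   E_{k,k} is (δ_{ik} - δ_{jk}) :a(-i) a*(j):, whose sum over k vanishes.  As w is a joint
   eigenvector of the E_{-i,j} (i >= 0, j >= 1), so is every I^k w.  If μ_j <> 0, the operator
   E_{j,j} = a(-j) (μ_j - ∂/∂a(-j)) raises the degree in a(-j) by one with leading coefficient
   μ_j, while every other E_{k,k} preserves that degree.  Hence (I - d) p has a nonzero
   coefficient on a nonconstant monomial for every d and every p <> 0.  This gives
   I^k w ∉ C w, and, N_d being contained in the image of the central operator I - d, w ∉ N_d. *)

From Pilot Require Import Defs.
From HB Require Import structures.
From mathcomp Require Import all_boot all_algebra finmap.
From mathcomp Require Import complex Rstruct.
From Stdlib Require Import ClassicalEpsilon FunctionalExtensionality.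
From mathcomp Require Import ring zify.
Import GRing.Theory Num.Theory.
Local Open Scope ring_scope.

Set Implicit Arguments.
Unset Strict Implicit.
Unset Printing Implicit Defensive.

(* [(true, r)] stands for the variable a(r) and [(false, s)] for a*(s), so that [mulX] and
   [derX] below are [mulA]/[mulS] and [derA]/[derS] of Defs under one name. *)
Definition var := (bool * int)%type.

Definition expv (x : mono) (v : var) : nat := (if v.1 then x.1 else x.2) v.2.

Definition setv (x : mono) (v : var) (e : nat) : mono :=
  if v.1 then ([fsfun x.1 with v.2 |-> e], x.2) else (x.1, [fsfun x.2 with v.2 |-> e]).

Definition incv (v : var) (x : mono) : mono := setv x v (expv x v).+1.
Definition decv (v : var) (x : mono) : mono := setv x v (expv x v).-1.

Lemma expv_set x v e w : expv (setv x v e) w = if w == v then e else expv x w.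
Proof. by case: v w => [[] r] [[] s]; rewrite /expv /setv /= ?fsfun_withE. Qed.

Lemma eq_mono x y : (forall v, expv x v = expv y v) -> x = y.
Proof.
case: x y => [x1 x2] [y1 y2] exy.
have -> : x1 = y1 by apply/fsfunP => r; exact: (exy (true, r)).
by have -> : x2 = y2 by apply/fsfunP => s; exact: (exy (false, s)).
Qed.

Lemma expv_incv v x w : expv (incv v x) w = if w == v then (expv x v).+1 else expv x w.
Proof. exact: expv_set. Qed.

Lemma expv_decv v x w : expv (decv v x) w = if w == v then (expv x v).-1 else expv x w.
Proof. exact: expv_set. Qed.

Lemma expv_zero v : expv zero_mono v = 0%N.
Proof. by case: v => [[] r]; rewrite /expv fsfunE. Qed.

Local Ltac case_vars :=
  repeat (case: eqP => //=; try (move=> ?; subst)); try congruence.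

Lemma incvK v : cancel (incv v) (decv v).
Proof. by move=> x; apply: eq_mono => w; rewrite expv_decv !expv_incv; case_vars. Qed.

Lemma decvK v x : (0 < expv x v)%N -> incv v (decv v x) = x.
Proof.
by move=> x_v; apply: eq_mono => w; rewrite expv_incv !expv_decv; case_vars; rewrite prednK.
Qed.

Lemma incvC v w x : incv v (incv w x) = incv w (incv v x).
Proof. by apply: eq_mono => u; rewrite !expv_incv; case_vars. Qed.

Lemma decvC v w x : decv v (decv w x) = decv w (decv v x).
Proof. by apply: eq_mono => u; rewrite !expv_decv; case_vars. Qed.

Lemma incv_decv v w x : v != w -> incv v (decv w x) = decv w (incv v x).
Proof. by move/eqP=> vw; apply: eq_mono => u; rewrite !(expv_incv, expv_decv); case_vars. Qed.

Definition mulX (v : var) (p : V) : V := fun x =>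
  if (0 < expv x v)%N then p (decv v x) else 0.

Definition derX (v : var) (p : V) : V := fun x => (expv x v).+1%:R * p (incv v x).

Lemma mulXC v w p : mulX v (mulX w p) = mulX w (mulX v p).
Proof.
apply: functional_extensionality => x; rewrite /mulX.
have [<-|vw] := eqVneq v w; first by [].
rewrite !expv_decv (negbTE vw) eq_sym (negbTE vw) decvC.
by case: (0 < expv x v)%N; case: (0 < expv x w)%N.
Qed.

Lemma derXC v w p : derX v (derX w p) = derX w (derX v p).
Proof.
apply: functional_extensionality => x; rewrite /derX.
have [<-|vw] := eqVneq v w; first by [].
rewrite !expv_incv (negbTE vw) eq_sym (negbTE vw) incvC.
by rewrite !mulrA [_ * (expv x v).+1%:R]mulrC.
Qed.

Lemma derX_mulX v w p :
  derX v (mulX w p) = fun x => mulX w (derX v p) x + (v == w)%:R * p x.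
Proof.
apply: functional_extensionality => x; rewrite /mulX /derX.
have [<-|vw] := eqVneq v w.
  rewrite expv_incv eqxx /= incvK mul1r.
  case: (posnP (expv x v)) => [->|x_v]; first by rewrite mul1r add0r.
  by rewrite expv_decv eqxx prednK // decvK // -addn1 natrD mulrDl mul1r.
rewrite expv_incv eq_sym (negbTE vw) expv_decv (negbTE vw) mul0r addr0.
by case: ifP => _; rewrite ?mulr0 ?incv_decv.
Qed.

Lemma mulX_incv v p x : mulX v p (incv v x) = p x.
Proof. by rewrite /mulX expv_incv eqxx incvK. Qed.

Lemma mulX_derX v p x : mulX v (derX v p) x = (expv x v)%:R * p x.
Proof.
rewrite /mulX /derX; case: posnP => [->|x_v]; first by rewrite mul0r.
by rewrite expv_decv eqxx prednK // decvK.
Qed.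

Definition lin_op (F : V -> V) : Prop :=
  forall a p q, F (fun t => a * p t + q t) = fun t => a * F p t + F q t.

Section LinearOperators.
Variable F : V -> V.
Hypothesis linF : lin_op F.

Lemma lin_op0 : F (fun _ => 0) = fun _ => 0.
Proof.
have := linF 1 (fun _ => 0) (fun _ => 0).
have -> : (fun t : mono => 1 * (fun _ => 0 : C) t + (fun _ => 0) t) = (fun _ => 0).
  by apply: functional_extensionality => t; rewrite mul1r addr0.
move=> F0; apply: functional_extensionality => t.
have := congr1 (fun f => f t) F0; rewrite /= mul1r => F0t.
by apply: (@addrI _ (F (fun _ => 0) t)); rewrite addr0 -F0t.
Qed.

Lemma lin_opD p q : F (fun t => p t + q t) = fun t => F p t + F q t.
Proof.
have := linF 1 p q.
have -> : (fun t => 1 * p t + q t) = (fun t => p t + q t).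
  by apply: functional_extensionality => t; rewrite mul1r.
by move=> ->; apply: functional_extensionality => t; rewrite mul1r.
Qed.

Lemma lin_opZ a p : F (fun t => a * p t) = fun t => a * F p t.
Proof.
have := linF a p (fun _ => 0).
have -> : (fun t => a * p t + (fun _ => 0 : C) t) = (fun t => a * p t).
  by apply: functional_extensionality => t; rewrite addr0.
by move=> ->; rewrite lin_op0; apply: functional_extensionality => t; rewrite addr0.
Qed.

Lemma lin_opB p q : F (fun t => p t - q t) = fun t => F p t - F q t.
Proof.
have := linF (-1) q p.
have -> : (fun t => -1 * q t + p t) = (fun t => p t - q t).
  by apply: functional_extensionality => t; rewrite mulN1r addrC.
by move=> ->; apply: functional_extensionality => t; rewrite mulN1r addrC.
Qed.

Lemma lin_op_sum I (r : seq I) (f : I -> V) :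
  F (fun t => \sum_(i <- r) f i t) = fun t => \sum_(i <- r) F (f i) t.
Proof.
elim: r => [|i r IH].
  have -> : (fun t => \sum_(i <- [::]) f i t) = (fun _ => 0).
    by apply: functional_extensionality => t; rewrite big_nil.
  by rewrite lin_op0; apply: functional_extensionality => t; rewrite big_nil.
have -> : (fun t => \sum_(j <- i :: r) f j t) = (fun t => f i t + \sum_(j <- r) f j t).
  by apply: functional_extensionality => t; rewrite big_cons.
by rewrite lin_opD IH; apply: functional_extensionality => t; rewrite big_cons.
Qed.

End LinearOperators.

Lemma lin_op_comp F G : lin_op F -> lin_op G -> lin_op (fun p => F (G p)).
Proof. by move=> linF linG a p q; rewrite linG linF. Qed.

Lemma lin_op_mulX v : lin_op (mulX v).
Proof.
move=> a p q; apply: functional_extensionality => x; rewrite /mulX.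
by case: ifP => _; rewrite ?mulr0 ?addr0.
Qed.

Lemma lin_op_derX v : lin_op (derX v).
Proof. by move=> a p q; apply: functional_extensionality => x; rewrite /derX mulrDr mulrCA. Qed.

Definition inadmissible_var (v : var) : bool := if v.1 then 0 <= v.2 else 1 <= v.2.

Lemma admissibleE x : admissible x <-> forall v, inadmissible_var v -> expv x v = 0%N.
Proof.
split; first by case=> x1 x2 [[] r] /=; [exact: x1 | exact: x2].
by move=> xv; split=> r r_ge; [exact: (xv (true, r)) | exact: (xv (false, r))].
Qed.

Lemma inM1_cover q p1 p2 : inM1 p1 -> inM1 p2 ->
  (forall x, q x != 0 -> p1 x != 0 \/ p2 x != 0) -> inM1 q.
Proof.
move=> [[s1 supp1] adm1] [[s2 supp2] adm2] qp; split.
  exists (s1 ++ s2) => x /qp [] ?; rewrite mem_cat; apply/orP; [left; exact: supp1 | right; exact: supp2].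
by move=> x /qp [] ?; [exact: adm1 | exact: adm2].
Qed.

Lemma inM1_0 : inM1 (fun _ => 0).
Proof. by split; [exists [::] => x; rewrite eqxx | move=> x; rewrite eqxx]. Qed.

Lemma inM1_add p q : inM1 p -> inM1 q -> inM1 (fun t => p t + q t).
Proof.
move=> Mp Mq; apply: inM1_cover Mp Mq _ => x.
by case: (eqVneq (p x) 0) => [->|]; [rewrite add0r; right | left].
Qed.

Lemma inM1_scale a p : inM1 p -> inM1 (fun t => a * p t).
Proof.
move=> Mp; apply: (inM1_cover Mp Mp) => x ax; left.
by apply: contraNneq ax => ->; rewrite mulr0.
Qed.

Lemma inM1_opp p : inM1 p -> inM1 (fun t => - p t).
Proof. by move=> Mp; apply: (inM1_cover Mp Mp) => x; rewrite oppr_eq0; left. Qed.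

Lemma inM1_sum I (r : seq I) (f : I -> V) :
  (forall i, inM1 (f i)) -> inM1 (fun t => \sum_(i <- r) f i t).
Proof.
move=> Mf; elim: r => [|i r IH].
  suff -> : (fun t => \sum_(i <- [::]) f i t) = (fun _ => 0) by exact: inM1_0.
  by apply: functional_extensionality => t; rewrite big_nil.
have -> : (fun t => \sum_(j <- i :: r) f j t) = (fun t => f i t + \sum_(j <- r) f j t).
  by apply: functional_extensionality => t; rewrite big_cons.
exact: inM1_add.
Qed.

Lemma inM1_mulX v p : ~~ inadmissible_var v -> inM1 p -> inM1 (mulX v p).
Proof.
move=> v_adm [[s supp] adm]; rewrite /mulX; split.
  exists (map (incv v) s) => x; case: ifP => [x_v px|]; last by rewrite eqxx.
  by apply/mapP; exists (decv v x); [exact: supp | rewrite decvK].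
move=> x; case: ifP => [x_v px|]; last by rewrite eqxx.
apply/admissibleE => w w_inadm; have := (adm _ px).
move/admissibleE/(_ w w_inadm); rewrite expv_decv.
by case: eqP => [wv _|//]; rewrite -wv w_inadm in v_adm.
Qed.

Lemma inM1_derX v p : inM1 p -> inM1 (derX v p).
Proof.
move=> [[s supp] adm].
have p_inc x : derX v p x != 0 -> p (incv v x) != 0.
  by rewrite /derX; apply: contraNneq => ->; rewrite mulr0.
split.
  exists (map (decv v) s) => x /p_inc px.
  by apply/mapP; exists (incv v x); [exact: supp | rewrite incvK].
move=> x /p_inc /adm /admissibleE adm_x; apply/admissibleE => w /adm_x.
by rewrite expv_incv; case: eqP.
Qed.

Lemma inM1_wvec : inM1 wvec.
Proof.
rewrite /wvec; split.
  by exists [:: zero_mono] => x; case: (x =P zero_mono) => [->|]; rewrite ?inE ?eqxx.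
move=> x; case: (x =P zero_mono) => [-> _|]; last by rewrite eqxx.
by apply/admissibleE => v _; rewrite expv_zero.
Qed.

Definition avoids (p : V) (v : var) : Prop := forall x, p x != 0 -> expv x v = 0%N.

Lemma inM1_avoids_far p : inM1 p -> exists B, forall v, (B < `|v.2|)%N -> avoids p v.
Proof.
case=> [[s supp] _].
pose bound (x : mono) := maxn (\max_(r <- finsupp x.1) `|r|%N) (\max_(r <- finsupp x.2) `|r|%N).
have bound_ge x v : expv x v != 0%N -> (`|v.2| <= bound x)%N.
  case: v => [[] r] /= x_r; rewrite leq_max; apply/orP; [left|right];
    by apply: leq_bigmax_seq; rewrite ?mem_finsupp.
exists (\max_(x <- s) bound x) => v v_far x px; apply/eqP.
apply: contraTT v_far => /bound_ge x_v; rewrite -leqNgt.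
exact: leq_trans x_v (leq_bigmax_seq _ (supp _ px) _).
Qed.

Lemma mulX_derX_avoids v p : avoids p v -> mulX v (derX v p) = fun _ => 0.
Proof.
move=> p_v; apply: functional_extensionality => x; rewrite mulX_derX.
by case: (eqVneq (p x) 0) => [->|/p_v ->]; rewrite ?mulr0 ?mul0r.
Qed.

Lemma exists_top_exponent v p : inM1 p -> (exists x, p x != 0) ->
  exists2 x0, p x0 != 0 & forall z, (expv x0 v < expv z v)%N -> p z = 0.
Proof.
move=> [[s supp] _] [x px].
pose P e := has (fun x => (p x != 0) && (expv x v == e)) s.
have P_x : exists e, P e by exists (expv x v); apply/hasP; exists x; rewrite ?supp ?px ?eqxx.
have P_bound e : P e -> (e <= \max_(x <- s) expv x v)%N.
  by move=> /hasP [z zs /andP [_ /eqP <-]]; exact: leq_bigmax_seq.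
have [e /hasP [x0 _ /andP [px0 /eqP x0_e]] e_max] := ex_maxnP P_x P_bound.
exists x0 => // z; rewrite x0_e => e_lt; apply/eqP; apply: contraTT e_lt => pz.
by rewrite -leqNgt; apply: e_max; apply/hasP; exists z; rewrite ?supp ?pz ?eqxx.
Qed.

Lemma wvec_neq0 : wvec <> fun _ => 0.
Proof. by move/(congr1 (fun f => f zero_mono)) => /eqP; rewrite /wvec eqxx oner_eq0. Qed.

Section WhittakerModule.
Variables (n m : nat) (lam : 'I_n.+1 -> C) (mu : 'I_m -> C).

Lemma aopE r p : aop lam r p =
  if 0 <= r then fun x => lamx lam r * p x + derX (false, - r) p x else mulX (true, r) p.
Proof. by []. Qed.

Lemma asopE s p : asop mu s p =
  if 1 <= s then fun x => mux mu s * p x - derX (true, - s) p x else mulX (false, s) p.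
Proof. by []. Qed.

Lemma lin_op_aop r : lin_op (aop lam r).
Proof.
move=> a p q; rewrite !aopE; case: ifP => _; last exact: lin_op_mulX.
by rewrite lin_op_derX; apply: functional_extensionality => x; ring.
Qed.

Lemma lin_op_asop s : lin_op (asop mu s).
Proof.
move=> a p q; rewrite !asopE; case: ifP => _; last exact: lin_op_mulX.
by rewrite lin_op_derX; apply: functional_extensionality => x; ring.
Qed.

Lemma aopC r r' p : aop lam r (aop lam r' p) = aop lam r' (aop lam r p).
Proof.
rewrite !aopE; case: (0 <= r); case: (0 <= r').
- by rewrite !lin_op_derX derXC; apply: functional_extensionality => x; ring.
- rewrite lin_op_mulX derX_mulX xpair_eqE /=.
  by apply: functional_extensionality => x; ring.
- rewrite lin_op_mulX derX_mulX xpair_eqE /=.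
  by apply: functional_extensionality => x; ring.
- by rewrite mulXC.
Qed.

Lemma asopC s s' p : asop mu s (asop mu s' p) = asop mu s' (asop mu s p).
Proof.
rewrite !asopE; case: (1 <= s); case: (1 <= s').
- rewrite !(lin_opB (lin_op_derX _)) !(lin_opZ (lin_op_derX _)) derXC.
  by apply: functional_extensionality => x; ring.
- rewrite !(lin_opB (lin_op_mulX _)) !(lin_opZ (lin_op_mulX _)) derX_mulX xpair_eqE /=.
  by apply: functional_extensionality => x; ring.
- rewrite !(lin_opB (lin_op_mulX _)) !(lin_opZ (lin_op_mulX _)) derX_mulX xpair_eqE /=.
  by apply: functional_extensionality => x; ring.
- by rewrite mulXC.
Qed.

Lemma aop_asop r s p :
  aop lam r (asop mu s p) = fun t => asop mu s (aop lam r p) t + (r + s == 0)%:R * p t.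
Proof.
rewrite !aopE !asopE; case: (boolP (0 <= r)) => r_ge0; case: (boolP (1 <= s)) => s_ge1.
- have -> : (r + s == 0) = false by lia.
  rewrite (lin_opB (lin_op_derX _)) (lin_opZ (lin_op_derX _)) lin_op_derX derXC.
  by apply: functional_extensionality => x /=; ring.
- rewrite lin_op_mulX derX_mulX.
  have -> : (false, - r) == (false, s) = (r + s == 0) by rewrite xpair_eqE /=; lia.
  by apply: functional_extensionality => x; ring.
- rewrite (lin_opB (lin_op_mulX _)) (lin_opZ (lin_op_mulX _)) derX_mulX.
  have -> : (true, - s) == (true, r) = (r + s == 0) by rewrite xpair_eqE /=; lia.
  by apply: functional_extensionality => x; ring.
- have -> : (r + s == 0) = false by lia.
  by rewrite mulXC; apply: functional_extensionality => x /=; ring.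
Qed.

Lemma asop_aop s r p :
  asop mu s (aop lam r p) = fun t => aop lam r (asop mu s p) t - (r + s == 0)%:R * p t.
Proof. by rewrite aop_asop; apply: functional_extensionality => t; ring. Qed.

Definition Xop i j p := aop lam (- i) (asop mu j p).

Lemma Eop_Xop i j p :
  Eop lam mu i j p = fun t => Xop i j p t - ((i == j) && (i <= 0))%:R * p t.
Proof.
rewrite /Eop /Xop; case: ifP => [/andP [i_le0 j_le0]|ij].
  by rewrite asop_aop (_ : - i + j == 0 = (i == j) && (i <= 0)) //; lia.
have -> : (i == j) && (i <= 0) = false by lia.
by apply: functional_extensionality => t /=; rewrite mul0r subr0.
Qed.

Lemma lin_op_Xop i j : lin_op (Xop i j).
Proof. exact: lin_op_comp (lin_op_aop _) (lin_op_asop _). Qed.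

Lemma lin_op_Eop i j : lin_op (Eop lam mu i j).
Proof.
rewrite /Eop; case: ((0 <= - i) && (j <= 0)).
  exact: lin_op_comp (lin_op_asop _) (lin_op_aop _).
exact: lin_op_comp (lin_op_aop _) (lin_op_asop _).
Qed.

Lemma Xop_comm_diag i j k p :
  Xop i j (Xop k k p) =
  fun t => Xop k k (Xop i j p) t + ((i == k)%:R - (j == k)%:R) * Xop i j p t.
Proof.
rewrite /Xop asop_aop (lin_opB (lin_op_aop _)) (lin_opZ (lin_op_aop _)).
rewrite aopC asopC aop_asop (lin_opD (lin_op_aop _)) (lin_opZ (lin_op_aop _)).
have oppD_eq0 (x y : int) : (- x + y == 0) = (x == y) by rewrite addrC subr_eq0 eq_sym.
rewrite !oppD_eq0 [k == j]eq_sym; apply: functional_extensionality => t.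
by case: (eqVneq i k) => [->|ik]; case: (eqVneq j k) => [->|jk];
  rewrite ?eqxx ?(negbTE ik) ?(negbTE jk) /=; ring.
Qed.

Lemma Eop_comm_diag i j k p :
  Eop lam mu i j (Eop lam mu k k p) =
  fun t => Eop lam mu k k (Eop lam mu i j p) t + ((i == k)%:R - (j == k)%:R) * Xop i j p t.
Proof.
rewrite ![Eop lam mu _ _ _]Eop_Xop.
rewrite !(lin_opB (lin_op_Xop _ _)) !(lin_opZ (lin_op_Xop _ _)) Xop_comm_diag.
by apply: functional_extensionality => t; ring.
Qed.

Lemma inM1_aop r p : inM1 p -> inM1 (aop lam r p).
Proof.
move=> Mp; rewrite aopE; case: ifP => r_ge0.
  by apply: inM1_add; [exact: inM1_scale | exact: inM1_derX].
by apply: inM1_mulX => //; rewrite /inadmissible_var /= r_ge0.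
Qed.

Lemma inM1_asop s p : inM1 p -> inM1 (asop mu s p).
Proof.
move=> Mp; rewrite asopE; case: ifP => s_ge1.
  by apply: inM1_add; [exact: inM1_scale | apply: inM1_opp; exact: inM1_derX].
by apply: inM1_mulX => //; rewrite /inadmissible_var /= s_ge1.
Qed.

Lemma inM1_Eop i j p : inM1 p -> inM1 (Eop lam mu i j p).
Proof.
move=> Mp; rewrite /Eop; case: ifP => _.
  by apply: inM1_asop; apply: inM1_aop.
by apply: inM1_aop; apply: inM1_asop.
Qed.

Lemma inM1_Ipart N p : inM1 p -> inM1 (Ipart lam mu N p).
Proof. by move=> Mp; apply: inM1_sum => k; apply: inM1_Eop. Qed.

Lemma Eop_diag_pos k p : 1 <= k ->
  Eop lam mu k k p = mulX (true, - k) (fun x => mux mu k * p x - derX (true, - k) p x).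
Proof.
move=> k_ge1; have nk_lt0 : (0 <= - k) = false by lia.
by rewrite /Eop nk_lt0 /= asopE k_ge1 aopE nk_lt0.
Qed.

Lemma Eop_diag_nonpos k p : k <= 0 ->
  Eop lam mu k k p = mulX (false, k) (fun x => lamx lam (- k) * p x + derX (false, k) p x).
Proof.
move=> k_le0; have nk_ge0 : 0 <= - k by lia.
have k_lt1 : (1 <= k) = false by lia.
by rewrite /Eop nk_ge0 k_le0 /= aopE nk_ge0 opprK asopE k_lt1.
Qed.

Lemma lamx_far i : (n < `|i|)%N -> lamx lam i = 0.
Proof. by case: i => [k|k] //= k_gt; rewrite insubF // ltnNge k_gt. Qed.

Lemma mux_far j : (m < `|j|)%N -> mux mu j = 0.
Proof. by case: j => [[|k]|k] //= k_gt; rewrite insubF // ltnNge -ltnS k_gt. Qed.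

Lemma Eop_diag_far k p : (maxn n m < `|k|)%N ->
  avoids p (true, - k) -> avoids p (false, k) -> Eop lam mu k k p = fun _ => 0.
Proof.
move=> k_far p_a p_as; case: (lerP 1 k) => [k_ge1|k_lt1].
  rewrite Eop_diag_pos // mux_far; last by lia.
  rewrite (lin_opB (lin_op_mulX _)) (lin_opZ (lin_op_mulX _)) mulX_derX_avoids //.
  by apply: functional_extensionality => x; rewrite mul0r subr0.
rewrite Eop_diag_nonpos ?lamx_far; try lia.
rewrite (lin_opD (lin_op_mulX _)) (lin_opZ (lin_op_mulX _)) mulX_derX_avoids //.
by apply: functional_extensionality => x; rewrite mul0r add0r.
Qed.

Lemma Ipart_succ N p :
  Eop lam mu N.+1 N.+1 p = (fun _ => 0) ->
  Eop lam mu (- N.+1%:Z) (- N.+1%:Z) p = (fun _ => 0) ->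
  Ipart lam mu N.+1 p = Ipart lam mu N p.
Proof.
move=> E_top E_bot; apply: functional_extensionality => x.
have sumE M : Ipart lam mu M p x =
    \sum_(0 <= k < (M + M).+1) Eop lam mu (k%:Z - M%:Z) (k%:Z - M%:Z) p x.
  by rewrite /Ipart big_mkord.
rewrite !sumE (_ : (N.+1 + N.+1).+1 = (N + N).+3)%N; last by lia.
rewrite big_nat_recl // big_nat_recr //= sub0r E_bot.
rewrite (_ : (N + N).+2%:Z - N.+1%:Z = N.+1%:Z); last by lia.
rewrite E_top add0r addr0; apply: eq_bigr => k _.
by rewrite (_ : k.+1%:Z - N.+1%:Z = k%:Z - N%:Z) //; lia.
Qed.

Lemma Ipart_stable p : inM1 p ->
  exists B, forall N, (B <= N)%N -> Ipart lam mu N p = Ipart lam mu B p.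
Proof.
move=> /inM1_avoids_far [B p_far]; exists (maxn B (maxn n m)) => N le_BN.
rewrite -(subnKC le_BN); elim: (N - _)%N => [|d IH]; first by rewrite addn0.
rewrite addnS Ipart_succ ?IH //; apply: Eop_diag_far; try apply: p_far => /=; lia.
Qed.

Lemma Iop_Ipart p : inM1 p ->
  exists B, forall N, (B <= N)%N -> Iop lam mu p = Ipart lam mu N p.
Proof.
move=> /Ipart_stable [B stable]; rewrite /Iop.
set P := fun u => exists N0, forall N, (N0 <= N)%N -> Ipart lam mu N p = u.
have [N1 eventually] : P (epsilon (inhabits (fun _ => 0)) P).
  by apply: epsilon_spec; exists (Ipart lam mu B p), B.
exists B => N le_BN; rewrite -(eventually (maxn N N1)) ?leq_maxr //.
by rewrite !stable // (leq_trans le_BN) ?leq_maxl.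
Qed.

Lemma lin_op_Ipart N : lin_op (Ipart lam mu N).
Proof.
move=> a p q; apply: functional_extensionality => x; rewrite /Ipart mulr_sumr -big_split.
by apply: eq_bigr => k _; rewrite lin_op_Eop.
Qed.

Lemma inM1_Iop p : inM1 p -> inM1 (Iop lam mu p).
Proof. by move=> Mp; have [B IB] := Iop_Ipart Mp; rewrite (IB B) //; exact: inM1_Ipart. Qed.

Lemma Iop_lin a p q : inM1 p -> inM1 q ->
  Iop lam mu (fun t => a * p t + q t) = fun t => a * Iop lam mu p t + Iop lam mu q t.
Proof.
move=> Mp Mq; have [Bp Ip] := Iop_Ipart Mp; have [Bq Iq] := Iop_Ipart Mq.
have [B Ipq] := Iop_Ipart (inM1_add (inM1_scale a Mp) Mq).
pose N := maxn B (maxn Bp Bq).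
by rewrite (Ip N) ?(Iq N) ?(Ipq N) ?lin_op_Ipart //; lia.
Qed.

Lemma Iop0 : Iop lam mu (fun _ => 0) = fun _ => 0.
Proof. by have [B IB] := Iop_Ipart inM1_0; rewrite (IB B) // lin_op0 //; exact: lin_op_Ipart. Qed.

Lemma Iop_scale a p : inM1 p -> Iop lam mu (fun t => a * p t) = fun t => a * Iop lam mu p t.
Proof.
move=> Mp; transitivity (Iop lam mu (fun t => a * p t + 0)).
  by congr (Iop lam mu _); apply: functional_extensionality => t; rewrite addr0.
rewrite Iop_lin ?Iop0 //; last exact: inM1_0.
by apply: functional_extensionality => t; rewrite addr0.
Qed.

Lemma sum_delta_shift N (i : int) : (`|i| <= N)%N ->
  \sum_(k < (N + N).+1) (i == k%:Z - N%:Z)%:R = 1 :> C.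
Proof.
move=> i_le; have iN_lt : (`|(i + N%:Z)%R| < (N + N).+1)%N by lia.
rewrite (bigD1 (Ordinal iN_lt)) //= big1 ?addr0 => [|k /eqP k_neq].
  by rewrite (_ : i == _) //; apply/eqP; lia.
rewrite (_ : i == _ = false) //; apply/eqP => ik; apply: k_neq; apply: val_inj => /=; lia.
Qed.

Lemma Eop_Iop i j p : inM1 p -> Eop lam mu i j (Iop lam mu p) = Iop lam mu (Eop lam mu i j p).
Proof.
move=> Mp; have [B1 I1] := Iop_Ipart Mp; have [B2 I2] := Iop_Ipart (inM1_Eop i j Mp).
pose N := maxn (maxn B1 B2) (maxn `|i| `|j|).
rewrite (I1 N) ?(I2 N) /Ipart ?(lin_op_sum (lin_op_Eop _ _)); try lia.
apply: functional_extensionality => t; under eq_bigr => k _ do rewrite Eop_comm_diag /=.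
by rewrite big_split /= -mulr_suml sumrB !sum_delta_shift ?subrr ?mul0r ?addr0 //; lia.
Qed.

Lemma derX_wvec v : derX v wvec = fun _ => 0.
Proof.
apply: functional_extensionality => x; rewrite /derX /wvec.
case: (incv v x =P zero_mono) => [inc0|]; last by rewrite mulr0.
by have := expv_zero v; rewrite -inc0 expv_incv eqxx.
Qed.

Lemma Eop_wvec (i j : nat) : (1 <= j)%N ->
  Eop lam mu (- i%:Z) j%:Z wvec = fun t => lamx lam i%:Z * mux mu j%:Z * wvec t.
Proof.
move=> j_ge1; have j_pos : (j%:Z <= 0) = false by lia.
have j_ge1' : 1 <= j%:Z by lia.
rewrite /Eop j_pos andbF opprK asopE j_ge1' aopE (_ : 0 <= i%:Z) //.
rewrite (lin_opB (lin_op_derX _)) (lin_opZ (lin_op_derX _)) !derX_wvec.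
by rewrite (lin_op0 (lin_op_derX _)); apply: functional_extensionality => x; ring.
Qed.

Lemma inM1_iter_Iop_wvec k : inM1 (iter k (Iop lam mu) wvec).
Proof. by elim: k => [|k IH]; [exact: inM1_wvec | exact: inM1_Iop]. Qed.

Lemma Eop_iter_Iop_wvec (i j k : nat) : (1 <= j)%N ->
  Eop lam mu (- i%:Z) j%:Z (iter k (Iop lam mu) wvec) =
  fun t => lamx lam i%:Z * mux mu j%:Z * iter k (Iop lam mu) wvec t.
Proof.
move=> j_ge1; elim: k => [|k IH]; first exact: Eop_wvec.
have Mk := inM1_iter_Iop_wvec k.
by rewrite iterS Eop_Iop // IH Iop_scale.
Qed.

Definition Ishift (d : C) (p : V) : V := fun t => Iop lam mu p t - d * p t.

Section TopExponent.
Variables (j : int) (p : V) (x0 : mono).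
Hypothesis j_ge1 : 1 <= j.
Hypothesis p_top : forall z, (expv x0 (true, - j) < expv z (true, - j))%N -> p z = 0.

Let y := incv (true, - j) x0.

Lemma p_above_top : p y = 0.
Proof. by apply: p_top; rewrite expv_incv eqxx. Qed.

Lemma mulX_above_top w : w != (true, - j) -> mulX w p y = 0.
Proof.
move=> w_neq; rewrite /mulX; case: ifP => // _; apply: p_top.
by rewrite expv_decv eq_sym (negbTE w_neq) expv_incv eqxx.
Qed.

Lemma Eop_diag_above_top k : Eop lam mu k k p y = (k == j)%:R * (mux mu j * p x0).
Proof.
have mulX_derX_y w : mulX w (derX w p) y = 0 by rewrite mulX_derX p_above_top mulr0.
case: (lerP 1 k) => [k_ge1|k_lt1].
  rewrite Eop_diag_pos // (lin_opB (lin_op_mulX _)) (lin_opZ (lin_op_mulX _)) mulX_derX_y subr0.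
  have [->|k_neq] := eqVneq k j; first by rewrite /y mulX_incv mul1r.
  by rewrite mulX_above_top ?mulr0 ?mul0r // xpair_eqE /= eqr_opp.
rewrite Eop_diag_nonpos; last by lia.
rewrite (lin_opD (lin_op_mulX _)) (lin_opZ (lin_op_mulX _)) mulX_derX_y mulX_above_top //.
by rewrite (_ : k == j = false) ?mulr0 ?mul0r ?addr0 //; lia.
Qed.

Lemma Iop_above_top : inM1 p -> Iop lam mu p y = mux mu j * p x0.
Proof.
move=> Mp; have [B IB] := Iop_Ipart Mp; rewrite (IB (maxn B `|j|)) ?leq_maxl // /Ipart.
under eq_bigr => k _ do rewrite Eop_diag_above_top eq_sym.
by rewrite -mulr_suml sum_delta_shift ?leq_maxr ?mul1r.
Qed.

End TopExponent.

Section NonzeroMu.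
Variable j0 : 'I_m.
Hypothesis mu_j0 : mu j0 != 0.

Lemma Ishift_nonconstant d p : inM1 p -> (exists x, p x != 0) ->
  exists2 y, y != zero_mono & Ishift d p y != 0.
Proof.
move=> Mp p_neq0; pose j := j0.+1%:Z; have j_ge1 : 1 <= j by [].
have [x0 px0 x0_top] := exists_top_exponent (true, - j) Mp p_neq0.
exists (incv (true, - j) x0).
  by apply/eqP => y0; have := expv_zero (true, - j); rewrite -y0 expv_incv eqxx.
rewrite /Ishift Iop_above_top // p_above_top // mulr0 subr0 mulf_neq0 //.
by rewrite /mux /= valK.
Qed.

Lemma Ishift_in_Cw_eq0 d p : inM1 p ->
  (forall y, y != zero_mono -> Ishift d p y = 0) -> p = fun _ => 0.
Proof.
move=> Mp p_Cw; apply: functional_extensionality => x; apply/eqP/negPn/negP => px.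
have [y /p_Cw ->] := Ishift_nonconstant d Mp (ex_intro _ x px).
by rewrite eqxx.
Qed.

Lemma iter_Iop_wvec_neq0 k : iter k (Iop lam mu) wvec <> fun _ => 0.
Proof.
elim: k => [|k IH Ik0]; first exact: wvec_neq0.
apply: IH; apply: (Ishift_in_Cw_eq0 (d := 0) (inM1_iter_Iop_wvec k)) => y _.
by rewrite /Ishift -iterS Ik0 mul0r subr0.
Qed.

Lemma iter_Iop_wvec_notin_Cw k : (1 <= k)%N ->
  ~ exists c, iter k (Iop lam mu) wvec = fun t => c * wvec t.
Proof.
case: k => // k _ [c Ik_c]; apply: (@iter_Iop_wvec_neq0 k).
apply: (Ishift_in_Cw_eq0 (d := 0) (inM1_iter_Iop_wvec k)) => y y_neq0.
by rewrite /Ishift -iterS Ik_c /wvec (negbTE y_neq0) mul0r mulr0 subr0.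
Qed.

Lemma gen_submodule_Ishift d v : gen_submodule lam mu (Nd_gens lam mu d) v ->
  exists2 u, inM1 u & v = Ishift d u.
Proof.
move/(_ (fun v => exists2 u, inM1 u & v = Ishift d u)); apply.
- exists (fun _ => 0); first exact: inM1_0.
  by rewrite /Ishift Iop0; apply: functional_extensionality => t; ring.
- move=> _ _ [u1 Mu1 ->] [u2 Mu2 ->]; exists (fun t => 1 * u1 t + u2 t).
    by apply: inM1_add => //; exact: inM1_scale.
  by rewrite /Ishift Iop_lin //; apply: functional_extensionality => t; ring.
- move=> c _ [u Mu ->]; exists (fun t => c * u t); first exact: inM1_scale.
  by rewrite /Ishift Iop_scale //; apply: functional_extensionality => t; ring.
- move=> i j _ [u Mu ->]; exists (Eop lam mu i j u); first exact: inM1_Eop.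
  by rewrite /Ishift (lin_opB (lin_op_Eop _ _)) (lin_opZ (lin_op_Eop _ _)) Eop_Iop.
- by move=> _ [k ->]; exists (iter k (Iop lam mu) wvec); first exact: inM1_iter_Iop_wvec.
Qed.

Lemma wvec_notin_Nd d : ~ gen_submodule lam mu (Nd_gens lam mu d) wvec.
Proof.
move=> /gen_submodule_Ishift [u Mu w_eq].
have u0 : u = fun _ => 0.
  by apply: (Ishift_in_Cw_eq0 (d := d) Mu) => y y_neq0; rewrite -w_eq /wvec (negbTE y_neq0).
by apply: wvec_neq0; rewrite w_eq u0 /Ishift Iop0; apply: functional_extensionality => t; ring.
Qed.

End NonzeroMu.

Lemma gen_submodule_inM1 d v : gen_submodule lam mu (Nd_gens lam mu d) v -> inM1 v.
Proof.
move/(_ inM1); apply=> [|x y|c x|i j x|_ [k ->]];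
  [exact: inM1_0 | exact: inM1_add | exact: inM1_scale | exact: inM1_Eop |].
have Mk := inM1_iter_Iop_wvec k.
by apply: inM1_add; [exact: inM1_Iop | apply: inM1_opp; exact: inM1_scale].
Qed.

End WhittakerModule.

Theorem lemma6p2 (n m : nat) (lam : 'I_n.+1 -> C) (mu : 'I_m -> C) :
  (1 <= m)%N ->
  (exists i, lam i != 0) ->
  (exists j, mu j != 0) ->
  (* (1) *)
  (forall k : nat, (1 <= k)%N ->
     (forall (i j : nat), (1 <= j)%N ->
        Eop lam mu (- (i%:Z)) (j%:Z) (iter k (Iop lam mu) wvec)
        = (fun t => lamx lam i%:Z * mux mu j%:Z * iter k (Iop lam mu) wvec t))
     /\ ~ (exists c : C, iter k (Iop lam mu) wvec = (fun t => c * wvec t)))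
  /\
  (* (2) *)
  (forall d : C,
     (forall v, gen_submodule lam mu (Nd_gens lam mu d) v -> inM1 v) /\
     (exists v, inM1 v /\ ~ gen_submodule lam mu (Nd_gens lam mu d) v)).
Proof.
move=> _ _ [j0 mu_j0]; split=> [k k_ge1 | d]; first split.
- by move=> i j j_ge1; exact: Eop_iter_Iop_wvec.
- exact: iter_Iop_wvec_notin_Cw mu_j0 _ k_ge1.
- split; first exact: gen_submodule_inM1.
  by exists wvec; split; [exact: inM1_wvec | exact: wvec_notin_Nd mu_j0 d].
Qed.
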